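(* Let $\mathbb F_q$ be a finite field and let $A \subseteq \mathbb F_q^n$ and $B \subseteq \mathbb F_q^m$ be nonempty, with $A \times B := \{(x,y) \in \mathbb F_q^{n+m} : x \in A, y \in B\}$. Then: (a) if $0 \in A$ and $0 \in B$, then $\omega(A \times B) = \omega(A) + \omega(B)$; (b) $\omega^\to(A \times B) = \omega^\to(A) + \omega^\to(B)$; (c) $\omega_{\mathrm{aff}}(A \times B) = \omega_{\mathrm{aff}}(A) + \omega_{\mathrm{aff}}(B)$; (d) if $0 \in A$ and $0 \in B$, then $\mathrm{rank}(A \times B) = \mathrm{rank}(A) + \mathrm{rank}(B)$; (e) $\mathrm{rank}_{\mathrm{aff}}(A \times B) = \mathrm{rank}_{\mathrm{aff}}(A) + \mathrm{rank}_{\mathrm{aff}}(B) - 1$.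
   Context: For nonempty $A \subseteq \mathbb F_q^n$: $\omega(A)$ is the largest dimension of a linear subspace of $\mathbb F_q^n$ contained in $A \cup \{0\}$; $\omega_{\mathrm{aff}}(A)$ is the largest dimension of an affine subspace of $\mathbb F_q^n$ contained in $A$; the direction set of $A$ is $A^\to := \{d \in \mathbb F_q^n : \exists x \in \mathbb F_q^n \text{ with } x + \lambda d \in A \text{ for all } \lambda \in \mathbb F_q\}$, and $\omega^\to(A) := \omega(A^\to)$. $\mathrm{rank}(A)$ is the dimension of the linear span of $A$. An affine relation on $x_1,\ldots,x_k$ is an equation $\sum_i \lambda_i x_i = 0$ with $\sum_i \lambda_i = 0$; $A$ is affinely independent if it has no such relation with some $\lambda_i \ne 0$, and $\mathrm{rank}_{\mathrm{aff}}(A)$ is the size of a maximal affinely independent subset of $A$. *)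

From HB Require Import structures.
From mathcomp Require Import all_boot all_order all_algebra.
Set Implicit Arguments. Unset Strict Implicit. Unset Printing Implicit Defensive.
Import GRing.Theory.
Local Open Scope ring_scope.

Section Defs.
Variable F : finFieldType.

Definition prodset (n m : nat) (A : {set 'rV[F]_n}) (B : {set 'rV[F]_m})
  : {set 'rV[F]_(n + m)} := [set row_mx x y | x in A, y in B].

(* A linear subspace is the row space of a square matrix M; its dimension is \rank M. *)
Definition lin_in (n : nat) (A : {set 'rV[F]_n}) (M : 'M[F]_n) : bool :=
  [forall v : 'rV[F]_n, (v <= M)%MS ==> (v \in A) || (v == 0)].

Definition omega (n : nat) (A : {set 'rV[F]_n}) : nat :=
  \max_(M : 'M[F]_n | lin_in A M) \rank M.

Definition aff_in (n : nat) (A : {set 'rV[F]_n}) (p : 'rV[F]_n * 'M[F]_n) : bool :=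
  [forall v : 'rV[F]_n, (v <= p.2)%MS ==> (p.1 + v \in A)].

Definition omega_aff (n : nat) (A : {set 'rV[F]_n}) : nat :=
  \max_(p : 'rV[F]_n * 'M[F]_n | aff_in A p) \rank p.2.

Definition dirset (n : nat) (A : {set 'rV[F]_n}) : {set 'rV[F]_n} :=
  [set d | [exists x : 'rV[F]_n, [forall l : F, x + l *: d \in A]]].

Definition omega_dir (n : nat) (A : {set 'rV[F]_n}) : nat := omega (dirset A).

Definition rank_set (n : nat) (A : {set 'rV[F]_n}) : nat :=
  \rank (\sum_(a in A) <<a>>)%MS.

Definition aff_indep (n : nat) (S : {set 'rV[F]_n}) : bool :=
  [forall l : {ffun 'rV[F]_n -> F},
     ((\sum_(x in S) l x *: x == 0) && (\sum_(x in S) l x == 0))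
       ==> [forall x in S, l x == 0]].

Definition rank_aff (n : nat) (A : {set 'rV[F]_n}) : nat :=
  \max_(S : {set 'rV[F]_n} | (S \subset A) && aff_indep S) #|S|.

End Defs.

From HB Require Import structures.
From mathcomp Require Import all_boot all_order all_algebra.
Set Implicit Arguments. Unset Strict Implicit. Unset Printing Implicit Defensive.
Import GRing.Theory.
Local Open Scope ring_scope.

(* A linear
   or affine subspace inside A x B projects onto subspaces inside A and inside B
   whose dimensions add up to at least its own, while the block-diagonal sum of
   subspaces inside A and inside B lies inside A x B; this gives (a) and (c), and
   (b) follows from (a) because the direction set of A x B is the product of the
   direction sets, which contain 0.  When 0 lies in A and in B, the span of A x B
   is the direct sum of the two spans, which gives (d).  For (e), the lift
   x |-> (1, x) turns affine independence into linear independence, so rank_aff A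
   is the rank of the span of the lifted set; for a0 in A that span is the line
   through (1, a0) plus {0} x span (A - a0), of rank 1 + rank (A - a0), and (e)
   follows from (d) applied to the translates A - a0 and B - b0. *)

Lemma bigmax_attained (I : finType) (P : pred I) (G : I -> nat) i0 :
  P i0 -> exists2 i, P i & \max_(j | P j) G j = G i.
Proof.
by move=> Pi0; rewrite (bigmax_eq_arg i0 Pi0); case: arg_maxnP => // i Pi _; exists i.
Qed.

Section ProductSets.
Variable F : finFieldType.

Lemma mxrank_row_mx_le p n m (X : 'M[F]_(p, n)) (Y : 'M[F]_(p, m)) :
  (\rank (row_mx X Y) <= \rank X + \rank Y)%N.
Proof.
rewrite -mxrank_tr tr_row_mx -addsmxE -(mxrank_tr X) -(mxrank_tr Y).
exact: mxrank_adds_leqif.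
Qed.

Lemma lsubmxEmul p n m (X : 'M[F]_(p, n + m)) : lsubmx X = X *m col_mx 1%:M 0.
Proof. by rewrite -{2}(hsubmxK X) mul_row_col mulmx1 mulmx0 addr0. Qed.

Lemma rsubmxEmul p n m (X : 'M[F]_(p, n + m)) : rsubmx X = X *m col_mx 0 1%:M.
Proof. by rewrite -{2}(hsubmxK X) mul_row_col mulmx1 mulmx0 add0r. Qed.

Lemma mul_row_diag_block p p1 p2 n m (u1 : 'M[F]_(p, p1)) (u2 : 'M[F]_(p, p2))
    (M1 : 'M[F]_(p1, n)) (M2 : 'M[F]_(p2, m)) :
  row_mx u1 u2 *m block_mx M1 0 0 M2 = row_mx (u1 *m M1) (u2 *m M2).
Proof. by rewrite mul_row_block !mulmx0 addr0 add0r. Qed.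

Lemma sub_row_diag_block p p1 p2 n m (v1 : 'M[F]_(p, n)) (v2 : 'M[F]_(p, m))
    (M1 : 'M[F]_(p1, n)) (M2 : 'M[F]_(p2, m)) :
  (row_mx v1 v2 <= block_mx M1 0 0 M2)%MS = (v1 <= M1)%MS && (v2 <= M2)%MS.
Proof.
apply/idP/andP => [/submxP[u] | [/submxP[u1 ->] /submxP[u2 ->]]].
  by rewrite -(hsubmxK u) mul_row_diag_block => /eq_row_mx[-> ->]; rewrite !submxMl.
by rewrite -mul_row_diag_block submxMl.
Qed.

Lemma row_mx_prodset n m (A : {set 'rV[F]_n}) (B : {set 'rV[F]_m}) a b :
  (row_mx a b \in prodset A B) = (a \in A) && (b \in B).
Proof.
apply/imset2P/andP => [[a' b' Aa' Bb' /eq_row_mx[-> ->]] // | [Aa Bb]].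
by exists a b.
Qed.

Lemma lsubmx_prodset n m (A : {set 'rV[F]_n}) (B : {set 'rV[F]_m}) x :
  x \in prodset A B -> lsubmx x \in A.
Proof. by rewrite -{1}(hsubmxK x) row_mx_prodset => /andP[]. Qed.

Lemma rsubmx_prodset n m (A : {set 'rV[F]_n}) (B : {set 'rV[F]_m}) x :
  x \in prodset A B -> rsubmx x \in B.
Proof. by rewrite -{1}(hsubmxK x) row_mx_prodset => /andP[]. Qed.

Lemma lin_inP n (A : {set 'rV[F]_n}) M :
  reflect (forall v, (v <= M)%MS -> (v \in A) || (v == 0)) (lin_in A M).
Proof. by apply: (iffP forallP) => AM v; apply/implyP/AM. Qed.

Lemma aff_inP n (A : {set 'rV[F]_n}) x M :
  reflect (forall v, (v <= M)%MS -> x + v \in A) (aff_in A (x, M)).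
Proof. by apply: (iffP forallP) => AM v; apply/implyP/AM. Qed.

Lemma rank_le_omega n (A : {set 'rV[F]_n}) M : lin_in A M -> (\rank M <= omega A)%N.
Proof. exact: leq_bigmax_cond. Qed.

Lemma rank_le_omega_aff n (A : {set 'rV[F]_n}) x M :
  aff_in A (x, M) -> (\rank M <= omega_aff A)%N.
Proof. exact: (leq_bigmax_cond (x, M)). Qed.

Lemma omega_attained n (A : {set 'rV[F]_n}) :
  exists2 M, lin_in A M & \rank M = omega A.
Proof.
have A0 : lin_in A 0 by apply/lin_inP => v; rewrite submx0 => ->; rewrite orbT.
rewrite /omega; have [M AM ->] := bigmax_attained (fun M => \rank M) A0.
by exists M.
Qed.

Lemma omega_aff_attained n (A : {set 'rV[F]_n}) : A != set0 ->
  exists2 p, aff_in A p & \rank p.2 = omega_aff A.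
Proof.
case/set0Pn=> a Aa; have Aa0 : aff_in A (a, 0).
  by apply/aff_inP => v; rewrite submx0 => /eqP ->; rewrite addr0.
rewrite /omega_aff; have [p Ap ->] := bigmax_attained (fun p => \rank p.2) Aa0.
by exists p.
Qed.

Lemma dirset0 n (A : {set 'rV[F]_n}) : A != set0 -> 0 \in dirset A.
Proof.
case/set0Pn=> a Aa; rewrite inE; apply/existsP; exists a.
by apply/forallP => c; rewrite scaler0 addr0.
Qed.

Section Image.
Variables (k l : nat) (C : {set 'rV[F]_k}) (D : {set 'rV[F]_l}) (P : 'M[F]_(k, l)).
Hypothesis CD : {in C, forall x, x *m P \in D}.

Lemma lin_in_mulmx M : lin_in C M -> lin_in D <<M *m P>>%MS.
Proof.
move=> /lin_inP CM; apply/lin_inP => v; rewrite genmxE => /submxP[u ->].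
rewrite mulmxA; have /orP[/CD -> // | /eqP ->] := CM _ (submxMl u M).
by rewrite mul0mx eqxx orbT.
Qed.

Lemma aff_in_mulmx x M : aff_in C (x, M) -> aff_in D (x *m P, <<M *m P>>%MS).
Proof.
move=> /aff_inP CM; apply/aff_inP => v; rewrite genmxE => /submxP[u ->].
by rewrite mulmxA -mulmxDl CD ?CM ?submxMl.
Qed.

End Image.

Definition span_set n (X : {set 'rV[F]_n}) : 'M[F]_n := (\sum_(a in X) <<a>>)%MS.

Lemma span_set_sup n (X : {set 'rV[F]_n}) a : a \in X -> (a <= span_set X)%MS.
Proof. by move=> Xa; apply: (sumsmx_sup a) => //; rewrite genmxE. Qed.

Lemma span_set_sub n p (X : {set 'rV[F]_n}) (C : 'M[F]_(p, n)) :
  {in X, forall a, a <= C}%MS -> (span_set X <= C)%MS.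
Proof. by move=> XC; apply/sumsmx_subP => a Xa; rewrite genmxE XC. Qed.

Lemma span_set_mulmx_sub n l p (X : {set 'rV[F]_n}) (R : 'M[F]_(n, l))
    (C : 'M[F]_(p, l)) :
  {in X, forall a, a *m R <= C}%MS -> (span_set X *m R <= C)%MS.
Proof.
move=> XC; rewrite (sumsmxMr_gen _ _ R); apply/sumsmx_subP => a Xa.
by rewrite genmxE (eqmxMr _ (genmxE a)) XC.
Qed.

Lemma span_set_setU1 n (X : {set 'rV[F]_n}) x :
  x \notin X -> (span_set (x |: X) :=: x + span_set X)%MS.
Proof. by move=> Xx; rewrite /span_set big_setU1 //; apply: adds_eqmx (genmxE x) _. Qed.

Lemma span_set_coef n (X : {set 'rV[F]_n}) v :
  (v <= span_set X)%MS -> exists c : 'rV[F]_n -> F, v = \sum_(a in X) c a *: a.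
Proof.
move=> /sub_sums_genmxP[u ->]; exists (fun a => u a 0 0).
by apply: eq_bigr => a _; rewrite {1}[u a]mx11_scalar mul_scalar_mx.
Qed.

Lemma sum_sub_span_set n (X : {set 'rV[F]_n}) (c : 'rV[F]_n -> F) :
  ((\sum_(a in X) c a *: a)%R <= span_set X)%MS.
Proof. by apply: summx_sub => a Xa; rewrite scalemx_sub // span_set_sup. Qed.

Lemma mxrank_adds_rV p n (x : 'rV[F]_n) (U : 'M[F]_(p, n)) :
  ~~ (x <= U)%MS -> \rank (x + U)%MS = (\rank U).+1.
Proof.
move=> xU; have x_nz : x != 0 by apply: contraNneq xU => ->; rewrite sub0mx.
rewrite mxrank_disjoint_sum ?rank_rV ?x_nz //.
apply/eqP/rowV0P => v; rewrite sub_capmx => /andP[/sub_rVP[a ->] axU].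
apply: contraNeq xU => ax_nz; have a_nz : a != 0.
  by apply: contraNneq ax_nz => ->; rewrite scale0r.
by move: axU; rewrite (eqmx_scale _ a_nz).
Qed.

Definition indep n (S : {set 'rV[F]_n}) : bool :=
  [forall l : {ffun 'rV[F]_n -> F},
     (\sum_(x in S) l x *: x == 0) ==> [forall x in S, l x == 0]].

Lemma indepP n (S : {set 'rV[F]_n}) :
  reflect (forall c : 'rV[F]_n -> F,
             \sum_(x in S) c x *: x = 0 -> {in S, forall x, c x = 0})
          (indep S).
Proof.
apply: (iffP forallP) => [indS c Sc0 x Sx | indS l].
  have /implyP := indS [ffun x => c x].
  rewrite (eq_bigr (fun x => c x *: x)) => [|y _]; last by rewrite ffunE.
  by rewrite Sc0 eqxx => /(_ isT) /forallP /(_ x); rewrite Sx ffunE => /eqP.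
by apply/implyP => /eqP /indS l0; apply/forallP => x; apply/implyP => /l0 ->.
Qed.

Lemma indep_setU1 n (T : {set 'rV[F]_n}) x :
  x \notin T -> indep (x |: T) = ~~ (x <= span_set T)%MS && indep T.
Proof.
move=> Tx; have sumU1 a c : \sum_(z in x |: T) (if z == x then a else c z) *: z
                             = a *: x + \sum_(z in T) c z *: z.
  rewrite big_setU1 //= eqxx; congr (_ + _); apply: eq_bigr => z Tz.
  by case: eqP => // zx; rewrite -zx Tz in Tx.
apply/idP/andP => [/indepP indxT | [xT /indepP indT]].
  split.
    apply/negP => /span_set_coef[c xE].
    have := indxT (fun z => if z == x then -1 else c z).
    rewrite sumU1 -xE scaleN1r addNr => /(_ erefl x (setU11 _ _)).
    by rewrite eqxx => /eqP; rewrite oppr_eq0 oner_eq0.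
  apply/indepP => c Tc0 y Ty.
  have := indxT (fun z => if z == x then 0 else c z).
  rewrite sumU1 Tc0 scale0r addr0 => /(_ erefl y (setU1r _ Ty)).
  by case: eqP => // yx; rewrite -yx Ty in Tx.
apply/indepP => c; rewrite big_setU1 //= => xTc0.
have cx0 : c x = 0.
  apply: contraNeq xT => cx_nz.
  have -> : x = - (c x)^-1 *: \sum_(z in T) c z *: z.
    move/eqP: xTc0; rewrite addrC addr_eq0 => /eqP ->.
    by rewrite scaleNr scalerN opprK scalerA mulVf // scale1r.
  by rewrite scalemx_sub // sum_sub_span_set.
move: xTc0; rewrite cx0 scale0r add0r => /indT Tc0 y.
by rewrite in_setU1 => /predU1P[-> | /Tc0].
Qed.

Lemma rank_span_set_indep n (S : {set 'rV[F]_n}) :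
  indep S -> \rank (span_set S) = #|S|.
Proof.
have [N] := ubnP #|S|; elim: N S => // N IH S ltSN indS.
have [-> | /set0Pn[x Sx]] := eqVneq S set0.
  by rewrite /span_set big_set0 mxrank0 cards0.
rewrite -(setD1K Sx) in ltSN indS *; have xS' : x \notin S :\ x by rewrite setD11.
move: indS; rewrite indep_setU1 // => /andP[xS'_span indS'].
rewrite span_set_setU1 // mxrank_adds_rV // IH //.
  by rewrite cardsU1 xS'.
by move: ltSN; rewrite cardsU1 xS'.
Qed.

Lemma indep_spanning_subset n (X : {set 'rV[F]_n}) :
  exists2 S : {set 'rV[F]_n}, (S \subset X) && indep S & (span_set X <= span_set S)%MS.
Proof.
have [N] := ubnP #|X|; elim: N X => // N IH X ltXN.
have [-> | /set0Pn[x Xx]] := eqVneq X set0.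
  exists set0; rewrite ?sub0set /span_set ?big_set0 ?sub0mx //.
  by apply/indepP => c _ y; rewrite inE.
rewrite -(setD1K Xx) in ltXN *; have xX' : x \notin X :\ x by rewrite setD11.
have [|S /andP[sSX' indS] spanS] := IH (X :\ x).
  by move: ltXN; rewrite cardsU1 xX'.
have [xS | xS] := boolP (x <= span_set S)%MS.
  exists S; first by rewrite indS (subset_trans sSX') ?subsetUr.
  by rewrite span_set_setU1 // addsmx_sub xS.
have Sx : x \notin S by apply: contra xS; apply: span_set_sup.
exists (x |: S); first by rewrite setUS // indep_setU1 // xS.
by rewrite !span_set_setU1 // addsmxS.
Qed.

Lemma bigmax_indep n (X : {set 'rV[F]_n}) :
  \max_(S : {set 'rV[F]_n} | (S \subset X) && indep S) #|S| = \rank (span_set X).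
Proof.
apply/eqP; rewrite eqn_leq; apply/andP; split.
  apply/bigmax_leqP => S /andP[sSX indS]; rewrite -rank_span_set_indep // mxrankS //.
  by apply: span_set_sub => a /(subsetP sSX); apply: span_set_sup.
have [S SX spanS] := indep_spanning_subset X.
apply: leq_trans (leq_bigmax_cond S SX); case/andP: SX => _ indS.
by rewrite -rank_span_set_indep // mxrankS.
Qed.

Lemma aff_indepP n (S : {set 'rV[F]_n}) :
  reflect (forall c : 'rV[F]_n -> F, \sum_(x in S) c x *: x = 0 ->
             \sum_(x in S) c x = 0 -> {in S, forall x, c x = 0})
          (aff_indep S).
Proof.
apply: (iffP forallP) => [affS c Sc0 Sc0' x Sx | affS l].
  have /implyP := affS [ffun x => c x].
  rewrite (eq_bigr (fun x => c x *: x)) => [|y _]; last by rewrite ffunE.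
  rewrite (eq_bigr c) => [|y _]; last by rewrite ffunE.
  by rewrite Sc0 Sc0' !eqxx => /(_ isT) /forallP /(_ x); rewrite Sx ffunE => /eqP.
apply/implyP => /andP[/eqP /affS l0 /eqP /l0 {}l0].
by apply/forallP => x; apply/implyP => /l0 ->.
Qed.

Definition homog {n} (x : 'rV[F]_n) : 'rV[F]_(1 + n) := row_mx 1%:M x.

Lemma homog_inj n : injective (@homog n).
Proof. by move=> x y /(congr1 rsubmx); rewrite !row_mxKr. Qed.

Lemma sum_homog n (S : {set 'rV[F]_n}) (c : 'rV[F]_n -> F) :
  \sum_(x in S) c x *: homog x
    = row_mx ((\sum_(x in S) c x) *: 1%:M) (\sum_(x in S) c x *: x).
Proof.
elim/big_rec3: _ => [|x y1 y2 y3 _ ->]; first by rewrite scale0r row_mx0.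
by rewrite scale_row_mx add_row_mx scalerDl.
Qed.

Lemma aff_indep_homog n (S : {set 'rV[F]_n}) : aff_indep S = indep (homog @: S).
Proof.
have homogS : {in S &, injective homog} by move=> x y _ _ /homog_inj.
apply/aff_indepP/indepP => [affS c | indH c Sc0 Sc0' x Sx].
  rewrite big_imset //= sum_homog -row_mx0 => /eq_row_mx[Sc0' Sc0] _ /imsetP[x Sx ->].
  move/(congr1 (fun M : 'M[F]_1 => M 0 0)): Sc0'; rewrite !mxE eqxx mulr1 => Sc0'.
  exact: (affS (c \o homog)).
have := indH (c \o rsubmx) _ (homog x) (imset_f _ Sx); rewrite /= row_mxKr; apply.
rewrite big_imset //= (eq_bigr (fun x => c x *: homog x)) => [|y _]; last first.
  by rewrite row_mxKr.
by rewrite sum_homog Sc0 Sc0' scale0r row_mx0.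
Qed.

Lemma rank_aff_homog n (A : {set 'rV[F]_n}) :
  rank_aff A = \rank (span_set (homog @: A)).
Proof.
rewrite -bigmax_indep; apply/eqP; rewrite eqn_leq; apply/andP; split.
  apply/bigmax_leqP => S /andP[sSA affS]; rewrite -(card_imset _ (@homog_inj n)).
  by apply: leq_bigmax_cond; rewrite imsetS //= -aff_indep_homog.
apply/bigmax_leqP => T /andP[sTA indT].
have TE : T = homog @: (rsubmx @: T).
  rewrite -imset_comp -[LHS]imset_id; apply: eq_in_imset => y /(subsetP sTA).
  by case/imsetP=> a _ ->; rewrite /= row_mxKr.
rewrite TE card_imset; last exact: homog_inj.
apply: leq_bigmax_cond; rewrite aff_indep_homog -TE indT andbT.
apply/subsetP => _ /imsetP[y /(subsetP sTA) /imsetP[a Aa ->] ->].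
by rewrite row_mxKr.
Qed.

Definition translate n (A : {set 'rV[F]_n}) a0 := [set a - a0 | a in A].

Lemma mem0_translate n (A : {set 'rV[F]_n}) a0 : a0 \in A -> 0 \in translate A a0.
Proof. by move=> Aa0; apply/imsetP; exists a0; rewrite ?subrr. Qed.

Lemma span_set_homog n (A : {set 'rV[F]_n}) a0 : a0 \in A ->
  (span_set (homog @: A) :=: homog a0 + row_mx 0 (span_set (translate A a0)))%MS.
Proof.
move=> Aa0.
have embed k (X : 'M[F]_(k, n)) : row_mx 0 X = X *m row_mx (0 : 'M_(n, 1)) 1%:M.
  by rewrite mul_mx_row mulmx0 mulmx1.
have homogB a : homog a - homog a0 = row_mx 0 (a - a0).
  by rewrite opp_row_mx add_row_mx subrr.
apply/eqmxP/andP; split.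
  apply: span_set_sub => _ /imsetP[a Aa ->].
  rewrite -[homog a](subrK (homog a0)) homogB addrC addmx_sub_adds //.
  rewrite (embed _ (a - a0)) (embed _ (span_set _)) submxMr // span_set_sup //.
  exact: imset_f.
rewrite addsmx_sub span_set_sup ?imset_f // (embed _ (span_set _)).
apply: span_set_mulmx_sub => _ /imsetP[a Aa ->].
by rewrite -embed -homogB addmx_sub ?eqmx_opp ?span_set_sup ?imset_f.
Qed.

Lemma rank_aff_translate n (A : {set 'rV[F]_n}) a0 :
  a0 \in A -> rank_aff A = (rank_set (translate A a0)).+1.
Proof.
move=> Aa0; rewrite rank_aff_homog (span_set_homog Aa0).
rewrite mxrank_adds_rV ?rank_row_0mx //.
apply/negP => /submxP[u]; rewrite mul_mx_row mulmx0 => /eq_row_mx[+ _].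
move/(congr1 (fun M : 'M[F]_1 => M 0 0)); rewrite !mxE eqxx => /eqP.
by rewrite oner_eq0.
Qed.

Section Product.
Variables (n m : nat) (A : {set 'rV[F]_n}) (B : {set 'rV[F]_m}).

Lemma lin_in_diag_block M1 M2 : 0 \in A -> 0 \in B ->
  lin_in A M1 -> lin_in B M2 -> lin_in (prodset A B) (block_mx M1 0 0 M2).
Proof.
move=> A0 B0 /lin_inP AM1 /lin_inP BM2; apply/lin_inP => v.
rewrite -(hsubmxK v) sub_row_diag_block row_mx_prodset => /andP[/AM1 vA /BM2 vB].
by case/orP: vA => [-> | /eqP ->]; case/orP: vB => [-> | /eqP ->]; rewrite ?A0 ?B0.
Qed.

Lemma aff_in_diag_block x1 x2 M1 M2 : aff_in A (x1, M1) -> aff_in B (x2, M2) ->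
  aff_in (prodset A B) (row_mx x1 x2, block_mx M1 0 0 M2).
Proof.
move=> /aff_inP AM1 /aff_inP BM2; apply/aff_inP => v.
rewrite -(hsubmxK v) sub_row_diag_block add_row_mx row_mx_prodset.
by case/andP=> /AM1 -> /BM2 ->.
Qed.

Lemma omega_prodset : 0 \in A -> 0 \in B ->
  omega (prodset A B) = (omega A + omega B)%N.
Proof.
move=> A0 B0; apply/eqP; rewrite eqn_leq; apply/andP; split.
  apply/bigmax_leqP => M ABM; rewrite -(hsubmxK M).
  apply: leq_trans (mxrank_row_mx_le _ _) _.
  rewrite lsubmxEmul rsubmxEmul -!(mxrank_gen (M *m _)) leq_add //.
    apply/rank_le_omega/(lin_in_mulmx _ ABM) => x.
    by rewrite -lsubmxEmul; apply: lsubmx_prodset.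
  apply/rank_le_omega/(lin_in_mulmx _ ABM) => x.
  by rewrite -rsubmxEmul; apply: rsubmx_prodset.
have [M1 AM1 <-] := omega_attained A; have [M2 BM2 <-] := omega_attained B.
by rewrite -rank_diag_block_mx rank_le_omega // lin_in_diag_block.
Qed.

Lemma omega_aff_prodset : A != set0 -> B != set0 ->
  omega_aff (prodset A B) = (omega_aff A + omega_aff B)%N.
Proof.
move=> nA nB; apply/eqP; rewrite eqn_leq; apply/andP; split.
  apply/bigmax_leqP => -[x M] ABM; rewrite -(hsubmxK M).
  apply: leq_trans (mxrank_row_mx_le _ _) _.
  rewrite lsubmxEmul rsubmxEmul -!(mxrank_gen (M *m _)) leq_add //.
    apply/rank_le_omega_aff/(aff_in_mulmx _ ABM) => y.
    by rewrite -lsubmxEmul; apply: lsubmx_prodset.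
  apply/rank_le_omega_aff/(aff_in_mulmx _ ABM) => y.
  by rewrite -rsubmxEmul; apply: rsubmx_prodset.
have [[x1 M1] AM1 <-] := omega_aff_attained nA.
have [[x2 M2] BM2 <-] := omega_aff_attained nB.
by rewrite -rank_diag_block_mx (rank_le_omega_aff (aff_in_diag_block AM1 BM2)).
Qed.

Lemma dirset_prodset : dirset (prodset A B) = prodset (dirset A) (dirset B).
Proof.
apply/setP => w; rewrite -(hsubmxK w) row_mx_prodset !inE.
apply/existsP/andP => [[x /forallP ABx] | []]; last first.
  move=> /existsP[x1 /forallP Ax1] /existsP[x2 /forallP Bx2].
  exists (row_mx x1 x2); apply/forallP => c.
  by rewrite scale_row_mx add_row_mx row_mx_prodset Ax1 Bx2.
split; apply/existsP.
  exists (lsubmx x); apply/forallP => c.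
  by have := lsubmx_prodset (ABx c); rewrite linearD linearZ /= row_mxKl.
exists (rsubmx x); apply/forallP => c.
by have := rsubmx_prodset (ABx c); rewrite linearD linearZ /= row_mxKr.
Qed.

Lemma span_set_prodset : 0 \in A -> 0 \in B ->
  (span_set (prodset A B) :=: block_mx (span_set A) 0 0 (span_set B))%MS.
Proof.
move=> A0 B0; apply/eqmxP/andP; split.
  apply: span_set_sub => w ABw; rewrite -(hsubmxK w) sub_row_diag_block.
  by rewrite !span_set_sup ?(lsubmx_prodset ABw) ?(rsubmx_prodset ABw).
have embedl k (X : 'M[F]_(k, n)) : row_mx X 0 = X *m row_mx 1%:M (0 : 'M_(n, m)).
  by rewrite mul_mx_row mulmx1 mulmx0.
have embedr k (X : 'M[F]_(k, m)) : row_mx 0 X = X *m row_mx (0 : 'M_(m, n)) 1%:M.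
  by rewrite mul_mx_row mulmx1 mulmx0.
rewrite block_mxEv col_mx_sub embedl embedr.
apply/andP; split; apply: span_set_mulmx_sub => a Xa.
  by rewrite -embedl span_set_sup // row_mx_prodset Xa B0.
by rewrite -embedr span_set_sup // row_mx_prodset Xa A0.
Qed.

Lemma rank_set_prodset :
  0 \in A -> 0 \in B -> rank_set (prodset A B) = (rank_set A + rank_set B)%N.
Proof.
move=> A0 B0; rewrite /rank_set -!/(span_set _).
by rewrite span_set_prodset // rank_diag_block_mx.
Qed.

Lemma translate_prodset a0 b0 :
  translate (prodset A B) (row_mx a0 b0) = prodset (translate A a0) (translate B b0).
Proof.
apply/setP => w; apply/imsetP/imset2P.
  case=> _ /imset2P[a b Aa Bb ->] ->.
  exists (a - a0) (b - b0); [exact: imset_f | exact: imset_f |].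
  by rewrite opp_row_mx add_row_mx.
case=> _ _ /imsetP[a Aa ->] /imsetP[b Bb ->] ->.
by exists (row_mx a b); rewrite ?row_mx_prodset ?Aa ?opp_row_mx ?add_row_mx.
Qed.

End Product.

Lemma omega_dir_prodset n m (A : {set 'rV[F]_n}) (B : {set 'rV[F]_m}) :
  A != set0 -> B != set0 ->
  omega_dir (prodset A B) = (omega_dir A + omega_dir B)%N.
Proof. by move=> nA nB; rewrite /omega_dir dirset_prodset omega_prodset ?dirset0. Qed.

Lemma rank_aff_prodset n m (A : {set 'rV[F]_n}) (B : {set 'rV[F]_m}) :
  A != set0 -> B != set0 ->
  rank_aff (prodset A B) = (rank_aff A + rank_aff B - 1)%N.
Proof.
case/set0Pn=> a0 Aa0; case/set0Pn=> b0 Bb0.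
have ABab0 : row_mx a0 b0 \in prodset A B by rewrite row_mx_prodset Aa0.
rewrite !(rank_aff_translate Aa0, rank_aff_translate Bb0, rank_aff_translate ABab0).
by rewrite translate_prodset rank_set_prodset ?mem0_translate // addSn addnS subn1.
Qed.

End ProductSets.

Unset Implicit Arguments.
Theorem proposition2p1 (F : finFieldType) (n m : nat)
  (A : {set 'rV[F]_n}) (B : {set 'rV[F]_m}) :
  A != set0 -> B != set0 ->
  [/\ (0 \in A -> 0 \in B -> omega (prodset A B) = (omega A + omega B)%N),
      omega_dir (prodset A B) = (omega_dir A + omega_dir B)%N,
      omega_aff (prodset A B) = (omega_aff A + omega_aff B)%N,
      (0 \in A -> 0 \in B -> rank_set (prodset A B) = (rank_set A + rank_set B)%N)
    & rank_aff (prodset A B) = (rank_aff A + rank_aff B - 1)%N].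
Proof.
move=> nA nB; split.
- exact: omega_prodset.
- exact: omega_dir_prodset.
- exact: omega_aff_prodset.
- exact: rank_set_prodset.
- exact: rank_aff_prodset.
Qed.
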